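(* Let $L>0$, and let $V\in C^1([0,L];\mathbb{R})$ and, for each $\varepsilon\in(0,1]$, $V_\varepsilon\in C^1([0,L];\mathbb{R})$ with $\|V-V_\varepsilon\|_{C^1([0,L])}\to0$ as $\varepsilon\to0^+$. Assume that the only point $x\in[0,L]$ with $V'(x)=0$ is $x=\mathbf{x}_0\in(0,L)$, and $V(\mathbf{x}_0)=\min_{[0,L]}V$. Then for any interval $U\subset[0,L]$ with nonempty interior and any $\delta>0$ there is $\varepsilon_0>0$ such that for all $\varepsilon\in(0,\varepsilon_0)$, all $E\in\mathbb{R}$ and all $\psi$ satisfying $$-\varepsilon^2\psi''+V_\varepsilon\psi=E\psi,\qquad \psi\in H^2(0,L)\cap H^1_0(0,L),\qquad \|\psi\|_{L^2(0,L)}=1,$$ we have $$\|\psi\|_{L^2(U)}\ge e^{-\frac1\varepsilon(d_{A,E}(U)+\delta)},\qquad d_{A,E}(U)=\inf_{x\in U}d_{A,E}(x),$$ and $$\frac{\varepsilon}{\sqrt{|E|+1}}|\psi'(0)|\ge e^{-\frac1\varepsilon(d_{A,E}(0)+\delta)},\qquad \frac{\varepsilon}{\sqrt{|E|+1}}|\psi'(L)|\ge e^{-\frac1\varepsilon(d_{A,E}(L)+\delta)}.$$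
   Context: Let $E_0=\min_{[0,L]}V=V(\mathbf{x}_0)$. For $E\ge E_0$ let $K_E=\{x\in[0,L]: V(x)\le E\}$ and define the Agmon distance $d_{A,E}(x)=\inf_{y\in K_E}\left|\int_y^x\sqrt{(V(s)-E)_+}\,ds\right|$, where $(t)_+=\max(t,0)$. For $E<E_0$, set by convention $d_{A,E}:=d_{A,E_0}$. *)

From Stdlib Require Import Reals.
From Coquelicot Require Import Coquelicot.
Open Scope R_scope.

(* f is C^1 on [0,L] with derivative f' (f, f' given on R; only their
   restriction to [0,L] matters: derivative at the endpoints is that of a
   C^1 extension, i.e. the one-sided derivative). *)
Definition C1_on (L : R) (f f' : R -> R) : Prop :=
  (forall x, 0 <= x <= L -> is_derive f x (f' x)) /\
  (forall x, 0 <= x <= L -> forall eta, 0 < eta -> exists rho, 0 < rho /\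
     forall y, 0 <= y <= L -> Rabs (y - x) < rho -> Rabs (f' y - f' x) < eta).

Definition agmon_int (V : R -> R) (E y x : R) : R :=
  Rabs (RInt (fun s => sqrt (Rmax (V s - E) 0)) y x).

(* Agmon distance d_{A,E}(x), with E_0 = V x0 = min V, and the convention
   d_{A,E} := d_{A,E_0} for E < E_0 (implemented via Rmax E E_0). *)
Definition agmon_dist (L : R) (V : R -> R) (x0 E x : R) : R :=
  let E' := Rmax E (V x0) in
  real (Glb_Rbar (fun r => exists y, 0 <= y <= L /\ V y <= E' /\
                                     r = agmon_int V E' y x)).

Definition agmon_dist_set (L : R) (V : R -> R) (x0 E : R) (U : R -> Prop) : R :=
  real (Glb_Rbar (fun r => exists x, U x /\ r = agmon_dist L V x0 E x)).

From Stdlib Require Import Reals Lra Psatz.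
From Coquelicot Require Import Coquelicot.
Open Scope R_scope.

(* Let psi = pr + i pi and W = Veps - E.  For tau > 0 the energy
   A = eps^2 |psi'|^2 + sqrt (W^2 + tau^2) |psi|^2 satisfies
   |A'| <= ((2 sqrt W_+ + sqrt tau) / eps + C / tau) A, so by Gronwall A changes between two
   points by at most exp ((2 / eps) int sqrt W_+ + O (sqrt tau / eps) + O (1)).  At a maximum
   point of |psi|^2 we have W <= 0 and A >= sqrt (W^2 + tau^2) / L; since V has a single
   critical point its sublevel sets are intervals, so from there int sqrt W_+ exceeds the Agmon
   distance by o (1) as Veps -> V.  At the Dirichlet endpoints A = eps^2 |psi'|^2, which gives
   the boundary bounds.  In U, on a window of length ~ delta where A is nearly constant,
   integrating eps^2 (Re (conj psi psi'))' = A - (sqrt (W^2 + tau^2) - W) |psi|^2 forces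
   L^2 mass.  Constants independent of eps cost only delta / 2 in the exponent. *)

Lemma exp_le_mono x y : x <= y -> exp x <= exp y.
Proof. intros [h|h]; [left; now apply exp_increasing| rewrite h; lra]. Qed.

Lemma sqrt_plus_le a b : 0 <= a -> 0 <= b -> sqrt (a + b) <= sqrt a + sqrt b.
Proof.
  intros ha hb. apply Rsqr_incr_0_var; [| pose proof (sqrt_pos a); pose proof (sqrt_pos b); lra].
  unfold Rsqr. rewrite sqrt_sqrt by lra.
  pose proof (sqrt_sqrt a ha). pose proof (sqrt_sqrt b hb).
  pose proof (Rmult_le_pos _ _ (sqrt_pos a) (sqrt_pos b)). nra.
Qed.

Lemma exp_le_sqrt X Y : 0 <= X -> exp (2 * Y) <= X -> exp Y <= sqrt X.
Proof.
  intros hX H. apply Rsqr_incr_0_var; [| apply sqrt_pos].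
  unfold Rsqr. rewrite sqrt_sqrt, <- exp_plus by lra. now replace (Y + Y) with (2 * Y) by ring.
Qed.

Lemma exp_absorb_const c eps d delta X : 0 < c -> 0 < eps -> eps * (Rabs (ln c) + 1) <= delta ->
  c * exp (- (2 / eps) * (d + delta / 2)) <= X -> exp (- (d + delta) / eps) <= sqrt X.
Proof.
  intros hc he hed H.
  assert (hcexp : exp (- (delta / eps)) <= c).
  { rewrite <- (exp_ln c hc). apply exp_le_mono.
    assert (delta / eps >= Rabs (ln c) + 1).
    { apply Rle_ge, (Rmult_le_reg_l eps); auto. now field_simplify; lra. }
    pose proof (Rle_abs (- ln c)). rewrite Rabs_Ropp in *. lra. }
  apply exp_le_sqrt.
  - eapply Rle_trans; [| exact H]. apply Rmult_le_pos; [lra| left; apply exp_pos].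
  - replace (2 * (- (d + delta) / eps)) with (- (delta / eps) + - (2 / eps) * (d + delta / 2))
      by (field; lra).
    rewrite exp_plus. eapply Rle_trans; [| exact H].
    apply Rmult_le_compat_r; [left; apply exp_pos| exact hcexp].
Qed.

Lemma lt_Rmin3 x a b c : x < Rmin a (Rmin b c) -> x < a /\ x < b /\ x < c.
Proof. unfold Rmin. repeat destruct Rle_dec; lra. Qed.

Lemma lt_div_mul_le x y c : 0 < c -> x < y / c -> x * c <= y.
Proof. intros hc h. apply (Rmult_lt_compat_r c) in h; [| exact hc]. field_simplify in h; lra. Qed.

Lemma Rabs_sub_le L x y : 0 <= x <= L -> 0 <= y <= L -> Rabs (x - y) <= L.
Proof. intros hx hy. apply Rabs_le. lra. Qed.

Lemma segment_in L y x s : 0 <= y <= L -> 0 <= x <= L -> Rmin y x <= s <= Rmax y x -> 0 <= s <= L.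
Proof. unfold Rmin, Rmax. destruct Rle_dec; lra. Qed.

Lemma W_plus_sqrt_le W tau : 0 < tau ->
  let m := sqrt (W ^ 2 + tau ^ 2) in
  0 <= W + m /\ W + m <= sqrt m * (2 * sqrt (Rmax W 0) + sqrt tau).
Proof.
  intros ht m.
  assert (hq : 0 < W ^ 2 + tau ^ 2) by (pose proof (pow2_ge_0 W); pose proof (pow_lt tau 2 ht); lra).
  assert (hm0 : 0 < m) by (apply sqrt_lt_R0, hq).
  assert (hm2 : m * m = W ^ 2 + tau ^ 2) by (apply sqrt_sqrt; lra).
  assert (hWm : - m <= W <= m) by (split; nra).
  assert (htm : tau <= m) by nra.
  set (r := sqrt m). set (t := sqrt tau). set (s := sqrt (Rmax W 0)).
  assert (hr2 : r * r = m) by (apply sqrt_sqrt; lra).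
  assert (ht2 : t * t = tau) by (apply sqrt_sqrt; lra).
  assert (hs2 : s * s = Rmax W 0) by (apply sqrt_sqrt, Rmax_r).
  assert (0 <= r /\ 0 <= t /\ 0 <= s) as [hr [htt hs]] by (repeat split; apply sqrt_pos).
  split; [lra|].
  destruct (Rle_lt_dec 0 W) as [hW|hW].
  - rewrite Rmax_left in hs2 by lra.
    assert (s <= r) by (apply Rsqr_incr_0_var; unfold Rsqr; [rewrite hs2, hr2|]; lra).
    assert (m <= W + tau) by nra.
    assert (r <= s + t) by (apply Rsqr_incr_0_var; unfold Rsqr; nra).
    nra.
  - assert ((W + m) * m <= tau ^ 2) by nra.
    assert (t <= r) by (apply Rsqr_incr_0_var; unfold Rsqr; [rewrite ht2, hr2|]; lra).
    assert (t * t * t <= r * r * r) by (assert (t * t <= r * r) by nra; nra).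
    assert (tau ^ 2 <= r * t * m) by (rewrite <- ht2, <- hr2; nra).
    assert (W + m <= r * t) by (apply (Rmult_le_reg_r m); nra).
    nra.
Qed.

Lemma drift_term_bound W m dv C tau u : 0 < tau <= m -> Rabs W <= m -> Rabs dv <= C -> 0 <= u ->
  Rabs (W * dv / m * u) <= C / tau * (m * u).
Proof.
  intros ht hW hdv hu. pose proof (Rabs_pos W). pose proof (Rabs_pos dv).
  replace (Rabs (W * dv / m * u)) with (Rabs W / m * Rabs dv * u)
    by (unfold Rdiv; rewrite !Rabs_mult, Rabs_inv, (Rabs_right m), (Rabs_right u) by lra; ring).
  replace (C / tau * (m * u)) with (m / tau * C * u) by (field; lra).
  apply Rmult_le_compat_r; [exact hu|]. apply Rmult_le_compat; try lra.
  - apply Rdiv_le_0_compat; lra.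
  - apply (Rmult_le_reg_r tau); [lra|]. apply (Rmult_le_reg_r m); [lra|]. field_simplify; nra.
Qed.

Lemma quadratic_lower_bound l alo mu eps ahi S : 0 < l -> 0 < alo -> 0 < mu -> 0 < eps -> 0 < ahi ->
  0 <= S -> l * alo <= mu * S + 2 * eps * sqrt (S / l * ahi) ->
  Rmin (l * alo / (2 * mu)) (l ^ 3 * alo ^ 2 / (16 * eps ^ 2 * ahi)) <= S.
Proof.
  intros hl halo hmu heps hahi hS H.
  destruct (Rle_lt_dec (l * alo / 2) (mu * S)) as [c|c].
  - eapply Rle_trans; [apply Rmin_l|]. apply (Rmult_le_reg_l mu); [exact hmu|]. field_simplify; lra.
  - eapply Rle_trans; [apply Rmin_r|].
    assert (q : l * alo / (4 * eps) <= sqrt (S / l * ahi)).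
    { apply (Rmult_le_reg_l (2 * eps)); [lra|]. field_simplify; lra. }
    assert (hX : 0 <= S / l * ahi) by (apply Rmult_le_pos; [apply Rdiv_le_0_compat|]; lra).
    assert (q2 : (l * alo / (4 * eps)) ^ 2 <= S / l * ahi).
    { rewrite <- (pow2_sqrt (S / l * ahi)) by exact hX.
      apply pow_incr. split; [apply Rdiv_le_0_compat; nra| exact q]. }
    apply (Rmult_le_reg_r (ahi / l)); [apply Rdiv_lt_0_compat; lra|].
    replace (S * (ahi / l)) with (S / l * ahi) by (field; lra).
    eapply Rle_trans; [| exact q2]. right. field. lra.
Qed.

Lemma Glb_Rbar_ge (P : R -> Prop) r :
  (exists t, P t) -> (forall t, P t -> r <= t) -> r <= real (Glb_Rbar P).
Proof.
  intros [t0 h0] hr. destruct (Glb_Rbar_correct P) as [lb glb].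
  assert (l0 : Rbar_le r (Glb_Rbar P)) by (apply glb; intros t ht; apply hr, ht).
  assert (l1 : Rbar_le (Glb_Rbar P) t0) by (apply lb, h0).
  destruct (Glb_Rbar P); simpl in *; easy.
Qed.

Lemma exp_Glb_Rbar_le (P : R -> Prop) (h k X : R) : 0 < k -> (exists t, P t) ->
  (forall t, P t -> exp (- (t + h) / k) <= X) -> exp (- (real (Glb_Rbar P) + h) / k) <= X.
Proof.
  intros hk [t0 h0] H.
  assert (hX : 0 < X) by (eapply Rlt_le_trans; [apply exp_pos| exact (H t0 h0)]).
  assert (hr : - k * ln X - h <= real (Glb_Rbar P)).
  { apply Glb_Rbar_ge; [now exists t0|]. intros t ht.
    assert (hl : - (t + h) / k <= ln X)
      by (rewrite <- (ln_exp (- (t + h) / k)); apply ln_le, H, ht; apply exp_pos).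
    apply (Rmult_le_compat_l k) in hl; [| lra]. field_simplify in hl; lra. }
  rewrite <- (exp_ln X hX). apply exp_le_mono.
  apply (Rmult_le_reg_l k); [exact hk|]. field_simplify; lra.
Qed.

Lemma is_derive_continuous (f : R -> R) x l : is_derive f x l -> continuous f x.
Proof. intro H. apply (@ex_derive_continuous R_AbsRing R_NormedModule). now exists l. Qed.

Lemma is_derive_continuity_pt (f : R -> R) x l : is_derive f x l -> continuity_pt f x.
Proof. intro H. apply continuity_pt_filterlim. exact (is_derive_continuous f x l H). Qed.

Lemma continuous_sqrt_pos_part (f : R -> R) x :
  continuous f x -> continuous (fun y => sqrt (Rmax (f y) 0)) x.
Proof.
  intro h. apply (continuous_ext (fun y => sqrt ((f y + Rabs (f y)) / 2))).
  - intro y. f_equal. unfold Rmax, Rabs. destruct Rle_dec, Rcase_abs; lra.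
  - apply continuous_sqrt_comp, (continuous_mult (fun y => f y + Rabs (f y)) (fun _ => / 2)).
    + apply (continuous_plus f (fun y => Rabs (f y))); [exact h| now apply continuous_Rabs_comp].
    + apply continuous_const.
Qed.

Definition continuous_on_0L (L : R) (f : R -> R) : Prop :=
  forall x, 0 <= x <= L -> forall eta, 0 < eta -> exists rho, 0 < rho /\
     forall y, 0 <= y <= L -> Rabs (y - x) < rho -> Rabs (f y - f x) < eta.

Lemma continuity_pt_on_0L L (f : R -> R) :
  (forall x, 0 <= x <= L -> continuity_pt f x) -> continuous_on_0L L f.
Proof.
  intros H x hx eta heta. destruct (H x hx eta heta) as [rho [hr H2]].
  exists rho; split; auto. intros y hy hyx. destruct (Req_dec y x) as [->|hne].
  - now rewrite Rminus_diag, Rabs_R0.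
  - apply (H2 y). now repeat split.
Qed.

(* Extending by constants outside [0, L] lets results stated on all of R (IVT, the derivative
   of [t |-> RInt f 0 t]) apply to functions that are only controlled on [0, L]. *)
Definition clamp (L x : R) : R := Rmax 0 (Rmin L x).

Lemma clamp_id L x : 0 <= x <= L -> clamp L x = x.
Proof. intros [h1 h2]. unfold clamp. rewrite Rmin_right, Rmax_right; lra. Qed.

Lemma clamp_in L x : 0 <= L -> 0 <= clamp L x <= L.
Proof. intro h. unfold clamp, Rmax, Rmin. repeat destruct Rle_dec; lra. Qed.

Lemma clamp_lipschitz L x y : 0 <= L -> Rabs (clamp L x - clamp L y) <= Rabs (x - y).
Proof. intro h. unfold clamp, Rmax, Rmin, Rabs. repeat destruct Rle_dec; repeat destruct Rcase_abs; lra. Qed.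

Lemma continuity_pt_clamp L (f : R -> R) : 0 <= L -> continuous_on_0L L f ->
  forall c, continuity_pt (fun x => f (clamp L x)) c.
Proof.
  intros hL H c eps heps. destruct (H (clamp L c) (clamp_in L c hL) eps heps) as [rho [hr H2]].
  exists rho. split; [exact hr|]. intros x [_ hx]. simpl in *. unfold R_dist in *.
  apply H2; [now apply clamp_in|]. eapply Rle_lt_trans; [apply clamp_lipschitz; auto| exact hx].
Qed.

Lemma C1_on_continuity_pt L (f f' : R -> R) x : C1_on L f f' -> 0 <= x <= L -> continuity_pt f x.
Proof. intros [Hd _] hx. exact (is_derive_continuity_pt f x (f' x) (Hd x hx)). Qed.

Lemma C1_on_MVT L (f f' : R -> R) p q : C1_on L f f' -> 0 <= p -> p <= q -> q <= L ->
  exists c, p <= c <= q /\ f q - f p = f' c * (q - p).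
Proof.
  intros [Hd _] h1 h2 h3.
  destruct (MVT_gen f p q f') as [c [hc e]]; rewrite Rmin_left, Rmax_right in * by lra.
  - intros x hx. apply Hd; lra.
  - intros x hx. apply (is_derive_continuity_pt f x (f' x)), Hd; lra.
  - now exists c.
Qed.

Lemma C1_on_IVT L (f f' : R -> R) p q : C1_on L f f' -> 0 <= p -> p <= q -> q <= L ->
  f' p * f' q <= 0 -> exists z, p <= z <= q /\ f' z = 0.
Proof.
  intros [_ Hc] h1 h2 h3 hpq.
  set (g := fun x => f' (clamp L x)).
  assert (cg : continuity g) by (intro c; apply continuity_pt_clamp; [lra| exact Hc]).
  assert (gp : g p = f' p) by (unfold g; now rewrite clamp_id by lra).
  assert (gq : g q = f' q) by (unfold g; now rewrite clamp_id by lra).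
  destruct (Req_dec (f' p) 0) as [e|np]; [exists p; split; [lra| exact e]|].
  destruct (Req_dec (f' q) 0) as [e|nq]; [exists q; split; [lra| exact e]|].
  assert (hlt : p < q) by (destruct h2 as [h2| <-]; [exact h2| nra]).
  destruct (Rlt_le_dec (f' p) 0) as [sp|sp].
  - destruct (IVT g p q cg hlt) as [z [hz ez]]; [lra| nra|].
    exists z. unfold g in ez. now rewrite clamp_id in ez by lra.
  - destruct (IVT (fun x => - g x) p q (continuity_opp g cg) hlt) as [z [hz ez]]; [lra| nra|].
    exists z. unfold g in ez. rewrite clamp_id in ez by lra. split; [exact hz| lra].
Qed.

Lemma C1_on_bounded L (f f' : R -> R) : 0 < L -> C1_on L f f' ->
  exists B M, forall x, 0 <= x <= L -> Rabs (f x) <= B /\ Rabs (f' x) <= M.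
Proof.
  intros hL Hf.
  destruct (continuity_ab_maj (fun x => Rabs (f x)) 0 L ltac:(lra)) as [xb [hb _]].
  { intros c hc. apply (continuity_pt_comp f Rabs); [eapply C1_on_continuity_pt; eauto| apply Rcontinuity_abs]. }
  destruct (continuity_ab_maj (fun x => Rabs (f' (clamp L x))) 0 L ltac:(lra)) as [xm [hm _]].
  { intros c _. apply (continuity_pt_comp (fun x => f' (clamp L x)) Rabs); [| apply Rcontinuity_abs].
    apply continuity_pt_clamp; [lra| exact (proj2 Hf)]. }
  exists (Rabs (f xb)), (Rabs (f' (clamp L xm))). intros x hx. split; [exact (hb x hx)|].
  specialize (hm x hx). simpl in hm. now rewrite clamp_id in hm.
Qed.

Lemma C1_on_perturbation L (V dV Ve dVe : R -> R) B M eta : C1_on L Ve dVe -> eta <= 1 ->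
  (forall x, 0 <= x <= L -> Rabs (V x) <= B /\ Rabs (dV x) <= M) ->
  (forall x, 0 <= x <= L -> Rabs (V x - Ve x) <= eta /\ Rabs (dV x - dVe x) <= eta) ->
  (forall x, 0 <= x <= L -> is_derive Ve x (dVe x) /\ Rabs (dVe x) <= M + 1) /\
  (forall x, 0 <= x <= L -> Rabs (Ve x) <= B + 1).
Proof.
  intros [Hd _] heta HBM Hclose. split; intros x hx; destruct (HBM x hx) as [hB hM];
    destruct (Hclose x hx) as [c1 c2].
  - split; [now apply Hd|]. pose proof (Rabs_triang_inv (dV x) (dVe x)). rewrite Rabs_minus_sym in c2.
    pose proof (Rabs_triang_inv (dVe x) (dV x)). lra.
  - pose proof (Rabs_triang_inv (Ve x) (V x)). rewrite Rabs_minus_sym in c1. lra.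
Qed.

Lemma le_of_is_derive_nonneg (h dh : R -> R) p q : p <= q ->
  (forall s, p <= s <= q -> is_derive h s (dh s) /\ 0 <= dh s) -> h p <= h q.
Proof.
  intros hpq H.
  destruct (MVT_gen h p q dh) as [c [hc e]]; rewrite Rmin_left, Rmax_right in * by lra.
  - intros x hx. apply H; lra.
  - intros x hx. apply (is_derive_continuity_pt h x (dh x)), H, hx.
  - destruct (H c hc) as [_ h2]. assert (0 <= dh c * (q - p)) by (apply Rmult_le_pos; lra). lra.
Qed.

Lemma exp_weighted_le (A dA Phi phi : R -> R) p q : p <= q ->
  (forall s, p <= s <= q ->
     is_derive A s (dA s) /\ is_derive Phi s (phi s) /\ 0 <= dA s + phi s * A s) ->
  A p * exp (Phi p) <= A q * exp (Phi q).
Proof.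
  intros hpq H.
  apply (le_of_is_derive_nonneg (fun s => A s * exp (Phi s))
           (fun s => (dA s + phi s * A s) * exp (Phi s)) p q hpq).
  intros s hs. destruct (H s hs) as [dA' [dPhi hsign]]. split.
  - evar (l : R). replace ((dA s + phi s * A s) * exp (Phi s)) with l; unfold l.
    + apply (is_derive_mult A (fun s => exp (Phi s))); [exact dA'| |intros; apply Rmult_comm].
      apply (is_derive_comp exp Phi); [apply is_derive_exp| exact dPhi].
    + simpl. unfold plus, scal; simpl; unfold mult; simpl. ring.
  - apply Rmult_le_pos; [exact hsign| left; apply exp_pos].
Qed.

Lemma gronwall_two_sided (A dA Phi phi : R -> R) p q : p <= q ->
  (forall s, p <= s <= q ->
     is_derive A s (dA s) /\ is_derive Phi s (phi s) /\ Rabs (dA s) <= phi s * A s) ->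
  A p * exp (- (Phi q - Phi p)) <= A q /\ A q * exp (- (Phi q - Phi p)) <= A p.
Proof.
  intros hpq H. split.
  - assert (M := exp_weighted_le A dA Phi phi p q hpq).
    apply (Rmult_le_reg_r (exp (Phi q))); [apply exp_pos|].
    rewrite Rmult_assoc, <- exp_plus. replace (- (Phi q - Phi p) + Phi q) with (Phi p) by ring.
    apply M. intros s hs. destruct (H s hs) as [? [? hb]].
    apply Rabs_le_between in hb. split; [|split]; auto; lra.
  - assert (M := exp_weighted_le (fun s => - A s) (fun s => - dA s) (fun s => - Phi s) (fun s => - phi s) p q hpq).
    apply (Rmult_le_reg_r (exp (- Phi p))); [apply exp_pos|].
    rewrite Rmult_assoc, <- exp_plus. replace (- (Phi q - Phi p) + - Phi p) with (- Phi q) by ring.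
    enough (- A p * exp (- Phi p) <= - A q * exp (- Phi q)) by lra.
    apply M. intros s hs. destruct (H s hs) as [? [? hb]].
    apply Rabs_le_between in hb.
    split; [|split]; [now apply (is_derive_opp A)| now apply (is_derive_opp Phi)| lra].
Qed.

Lemma RInt_le_sub (f : R -> R) a c d b : a <= c -> c <= d -> d <= b ->
  (forall x, a <= x <= b -> 0 <= f x) -> (forall x, a <= x <= b -> continuous f x) ->
  RInt f c d <= RInt f a b.
Proof.
  intros h1 h2 h3 hp hc.
  assert (ex : forall x y, a <= x -> x <= y -> y <= b -> ex_RInt f x y).
  { intros x y hx hxy hy. apply (@ex_RInt_continuous R_CompleteNormedModule). intros z hz.
    rewrite Rmin_left, Rmax_right in hz by lra. apply hc; lra. }
  rewrite <- (RInt_Chasles f a c b), <- (RInt_Chasles f c d b) by (apply ex; lra).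
  assert (0 <= RInt f a c) by (apply RInt_ge_0; [lra| apply ex; lra| intros; apply hp; lra]).
  assert (0 <= RInt f d b) by (apply RInt_ge_0; [lra| apply ex; lra| intros; apply hp; lra]).
  unfold plus; simpl. lra.
Qed.

Lemma Rabs_RInt_minmax (f : R -> R) y x : ex_RInt f (Rmin y x) (Rmax y x) ->
  Rabs (RInt f y x) = Rabs (RInt f (Rmin y x) (Rmax y x)).
Proof.
  intro ex. destruct (Rle_dec y x) as [h|h].
  - now rewrite Rmin_left, Rmax_right.
  - rewrite Rmin_right, Rmax_left in * by lra.
    rewrite <- (opp_RInt_swap f x y ex). unfold opp; simpl. apply Rabs_Ropp.
Qed.

Definition agmon_weight (W : R -> R) (E s : R) : R := sqrt (Rmax (W s - E) 0).

Lemma continuous_agmon_weight (W : R -> R) E s : continuity_pt W s -> continuous (agmon_weight W E) s.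
Proof.
  intro h. apply (continuous_sqrt_pos_part (fun s => W s - E)), continuity_pt_filterlim.
  apply continuity_pt_minus; [exact h| apply continuity_pt_const; now intros ? ?].
Qed.

Lemma agmon_weight_le_shift (W1 W2 : R -> R) E1 E2 c s : 0 <= c ->
  W1 s - E1 <= W2 s - E2 + c ^ 2 -> agmon_weight W1 E1 s <= agmon_weight W2 E2 s + c.
Proof.
  intros hc H. unfold agmon_weight. rewrite <- (sqrt_pow2 c) by lra.
  eapply Rle_trans; [| apply sqrt_plus_le; [apply Rmax_r| apply pow2_ge_0]].
  apply sqrt_le_1_alt. pose proof (pow2_ge_0 c). unfold Rmax; repeat destruct Rle_dec; lra.
Qed.

Lemma agmon_int_le_shift L (W1 W2 : R -> R) E1 E2 c y x : 0 <= c ->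
  (forall s, 0 <= s <= L -> continuity_pt W1 s /\ continuity_pt W2 s) ->
  0 <= y <= L -> 0 <= x <= L ->
  (forall s, Rmin y x <= s <= Rmax y x -> W1 s - E1 <= W2 s - E2 + c ^ 2) ->
  agmon_int W1 E1 y x <= agmon_int W2 E2 y x + c * Rabs (x - y).
Proof.
  intros hc cW hy hx H.
  set (a := Rmin y x). set (b := Rmax y x).
  assert (hab : a <= b) by (unfold a, b, Rmin, Rmax; destruct Rle_dec; lra).
  assert (ex : forall W E', (forall s, 0 <= s <= L -> continuity_pt W s) -> ex_RInt (agmon_weight W E') a b).
  { intros W E' cw. apply (@ex_RInt_continuous R_CompleteNormedModule). intros z hz.
    rewrite Rmin_left, Rmax_right in hz by exact hab.
    apply continuous_agmon_weight, cw, (segment_in L y x z hy hx hz). }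
  assert (ex1 := ex W1 E1 (fun s hs => proj1 (cW s hs))).
  assert (ex2 := ex W2 E2 (fun s hs => proj2 (cW s hs))).
  change (agmon_int ?W ?E y x) with (Rabs (RInt (agmon_weight W E) y x)).
  rewrite (Rabs_RInt_minmax (agmon_weight W1 E1)), (Rabs_RInt_minmax (agmon_weight W2 E2)) by assumption.
  fold a b. rewrite !Rabs_right by (apply Rle_ge, RInt_ge_0; auto; intros; apply sqrt_pos).
  replace (Rabs (x - y)) with (b - a)
    by (unfold a, b, Rmin, Rmax; destruct Rle_dec; [rewrite Rabs_right | rewrite Rabs_left]; lra).
  replace (RInt (agmon_weight W2 E2) a b + c * (b - a))
    with (RInt (fun s => agmon_weight W2 E2 s + c) a b).
  2:{ replace (c * (b - a)) with (RInt (fun _ => c) a b)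
        by (rewrite RInt_const; unfold scal; simpl; unfold mult; simpl; ring).
      exact (RInt_plus (agmon_weight W2 E2) (fun _ => c) a b ex2 (ex_RInt_const a b c)). }
  apply RInt_le; auto; [exact (ex_RInt_plus (agmon_weight W2 E2) (fun _ => c) a b ex2 (ex_RInt_const a b c))|].
  intros s hs. apply agmon_weight_le_shift; [exact hc|]. apply H. unfold a, b in hs. lra.
Qed.

Lemma agmon_int_le_const L (W : R -> R) E c y x : 0 <= c ->
  (forall s, 0 <= s <= L -> continuity_pt W s) -> 0 <= y <= L -> 0 <= x <= L ->
  (forall s, Rmin y x <= s <= Rmax y x -> W s - E <= c ^ 2) ->
  agmon_int W E y x <= c * Rabs (x - y).
Proof.
  intros hc cW hy hx H.
  assert (z : agmon_int (fun _ => 0) 0 y x = 0).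
  { unfold agmon_int. rewrite RInt_const, Rminus_0_r, Rmax_left, sqrt_0 by lra.
    unfold scal; simpl; unfold mult; simpl. now rewrite Rmult_0_r, Rabs_R0. }
  rewrite <- (Rplus_0_l (c * Rabs (x - y))), <- z.
  apply (agmon_int_le_shift L); auto.
  - intros s hs. split; [now apply cW| apply continuity_pt_const; now intros ? ?].
  - intros s hs. specialize (H s hs). lra.
Qed.

Lemma agmon_int_triangle L (W : R -> R) E y z x : (forall s, 0 <= s <= L -> continuity_pt W s) ->
  0 <= y <= L -> 0 <= z <= L -> 0 <= x <= L ->
  agmon_int W E y x <= agmon_int W E y z + agmon_int W E z x.
Proof.
  intros cW hy hz hx.
  assert (ex : forall p q, 0 <= p <= L -> 0 <= q <= L -> ex_RInt (agmon_weight W E) p q).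
  { intros p q hp hq. apply (@ex_RInt_continuous R_CompleteNormedModule).
    intros s hs. apply continuous_agmon_weight, cW, (segment_in L p q s hp hq hs). }
  change (agmon_int W E ?a ?b) with (Rabs (RInt (agmon_weight W E) a b)).
  rewrite <- (RInt_Chasles (agmon_weight W E) y z x) by auto. apply Rabs_triang.
Qed.

Section Unimodal.

Variables (L : R) (V dV : R -> R) (x0 : R).
Hypothesis HV : C1_on L V dV.
Hypothesis Hx0 : 0 < x0 < L.
Hypothesis Hcrit : forall x, 0 <= x <= L -> (dV x = 0 <-> x = x0).
Hypothesis Hmin : forall x, 0 <= x <= L -> V x0 <= V x.

Lemma V_nonincreasing_left p q : 0 <= p -> p <= q -> q <= x0 -> V q <= V p.
Proof.
  intros h1 h2 h3. apply Rnot_lt_le. intro hlt.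
  destruct (C1_on_MVT L V dV p q HV) as [c1 [hc1 e1]]; try lra.
  assert (d1 : dV c1 > 0) by (destruct (Rle_lt_dec (dV c1) 0); [nra| lra]).
  assert (hq : q < x0) by (destruct h3 as [h3|h3]; [exact h3| subst q; pose proof (Hmin p ltac:(lra)); lra]).
  destruct (C1_on_MVT L V dV q x0 HV) as [c2 [hc2 e2]]; try lra.
  assert (d2 : dV c2 < 0) by (pose proof (Hmin p ltac:(lra)); destruct (Rle_lt_dec 0 (dV c2)); [nra| lra]).
  destruct (C1_on_IVT L V dV c1 c2 HV) as [z [hz ez]]; try lra; [nra|].
  apply Hcrit in ez; [| lra]. subst z.
  assert (c2 = x0) by lra. subst c2. assert (dV x0 = 0) by (apply Hcrit; lra). lra.
Qed.

Lemma V_nondecreasing_right p q : x0 <= p -> p <= q -> q <= L -> V p <= V q.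
Proof.
  intros h1 h2 h3. apply Rnot_lt_le. intro hlt.
  destruct (C1_on_MVT L V dV p q HV) as [c1 [hc1 e1]]; try lra.
  assert (d1 : dV c1 < 0) by (destruct (Rle_lt_dec 0 (dV c1)); [nra| lra]).
  assert (hp : x0 < p) by (destruct h1 as [h1|h1]; [exact h1| subst p; pose proof (Hmin q ltac:(lra)); lra]).
  destruct (C1_on_MVT L V dV x0 p HV) as [c2 [hc2 e2]]; try lra.
  assert (d2 : dV c2 > 0) by (pose proof (Hmin q ltac:(lra)); destruct (Rle_lt_dec (dV c2) 0); [nra| lra]).
  destruct (C1_on_IVT L V dV c2 c1 HV) as [z [hz ez]]; try lra; [nra|].
  apply Hcrit in ez; [| lra]. subst z.
  assert (c2 = x0) by lra. subst c2. assert (dV x0 = 0) by (apply Hcrit; lra). lra.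
Qed.

Lemma V_le_max_ends y s z : 0 <= y -> y <= s -> s <= z -> z <= L -> V s <= Rmax (V y) (V z).
Proof.
  intros h1 h2 h3 h4. destruct (Rle_lt_dec s x0).
  - apply (Rle_trans _ (V y)); [apply V_nonincreasing_left; lra| apply Rmax_l].
  - apply (Rle_trans _ (V z)); [apply V_nondecreasing_right; lra| apply Rmax_r].
Qed.

(* The sublevel sets of V are intervals, so a point [ys] where V is nearly below E is joined
   to the classically allowed region at almost no Agmon cost. *)
Lemma agmon_int_le_agmon_dist (Ve : R -> R) E eta ys x : 0 <= eta ->
  (forall s, 0 <= s <= L -> continuity_pt Ve s) ->
  (forall s, 0 <= s <= L -> Rabs (V s - Ve s) <= eta) ->
  0 <= ys <= L -> Ve ys <= E -> 0 <= x <= L ->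
  agmon_int Ve E ys x <= agmon_dist L V x0 E x + L * (sqrt eta + sqrt (2 * eta)).
Proof.
  intros heta cVe Hclose hys hE hx.
  set (E' := Rmax E (V x0)).
  assert (cV : forall s, 0 <= s <= L -> continuity_pt V s) by (intros; eapply C1_on_continuity_pt; eauto).
  assert (h := Hclose ys hys). apply Rabs_le_between in h.
  assert (hys' : V ys <= E' + eta) by (pose proof (Rmax_l E (V x0)) as hm; fold E' in hm; lra).
  assert (hE' : E' - eta <= E) by (pose proof (Hmin ys hys); unfold E', Rmax; destruct Rle_dec; lra).
  assert (step : agmon_int Ve E ys x <= agmon_int V E' ys x + sqrt (2 * eta) * L).
  { apply (Rle_trans _ (agmon_int V E' ys x + sqrt (2 * eta) * Rabs (x - ys))).
    - apply (agmon_int_le_shift L Ve V E E' (sqrt (2 * eta)) ys x (sqrt_pos _)); auto.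
      intros s hs. pose proof (Hclose s (segment_in L ys x s hys hx hs)) as hs'.
      apply Rabs_le_between in hs'. rewrite pow2_sqrt by lra. lra.
    - apply Rplus_le_compat_l, Rmult_le_compat_l; [apply sqrt_pos| apply Rabs_sub_le; lra]. }
  enough (agmon_int Ve E ys x - L * (sqrt eta + sqrt (2 * eta)) <= agmon_dist L V x0 E x) by lra.
  apply Glb_Rbar_ge.
  - exists (agmon_int V E' x0 x), x0. repeat split; try lra. apply Rmax_r.
  - intros r [z [hz [hVz ->]]]. fold E' in hVz |- *.
    assert (near : agmon_int V E' ys z <= sqrt eta * L).
    { apply (Rle_trans _ (sqrt eta * Rabs (z - ys))).
      - apply (agmon_int_le_const L V E' (sqrt eta) ys z (sqrt_pos _)); auto. intros s hs. rewrite pow2_sqrt by lra.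
        assert (V s <= Rmax (V (Rmin ys z)) (V (Rmax ys z))).
        { apply V_le_max_ends; try tauto; [apply Rmin_glb| apply Rmax_lub]; lra. }
        assert (Rmax (V (Rmin ys z)) (V (Rmax ys z)) <= E' + eta)
          by (apply Rmax_lub; [unfold Rmin| unfold Rmax]; destruct Rle_dec; lra).
        lra.
      - apply Rmult_le_compat_l; [apply sqrt_pos| apply Rabs_sub_le; lra]. }
    pose proof (agmon_int_triangle L V E' ys z x cV hys hz hx).
    pose proof (sqrt_pos eta). pose proof (sqrt_pos (2 * eta)). lra.
Qed.

End Unimodal.

Ltac rewrite_Derive h :=
  match type of h with is_derive ?f ?x ?l =>
    replace (Derive (fun y => f y) x) with l by (symmetry; exact (is_derive_unique _ _ _ h))
  end.

Section Eigenfunction.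

Variables (L eps E tau C : R) (Ve dVe pr dpr d2pr pi dpi d2pi : R -> R).
Hypothesis Heps : 0 < eps.
Hypothesis Htau : 0 < tau.
Hypothesis Hpsi : forall x, 0 <= x <= L ->
  is_derive pr x (dpr x) /\ is_derive dpr x (d2pr x) /\
  is_derive pi x (dpi x) /\ is_derive dpi x (d2pi x) /\
  - eps ^ 2 * d2pr x + Ve x * pr x = E * pr x /\
  - eps ^ 2 * d2pi x + Ve x * pi x = E * pi x.
Hypothesis HVe : forall x, 0 <= x <= L -> is_derive Ve x (dVe x) /\ Rabs (dVe x) <= C.

(* With psi = pr + i pi: dens = |psi|^2, kin = |psi'|^2, flux = Re (conj psi psi') = dens' / 2,
   and absreg is |Ve - E| smoothed so that the energy is differentiable. *)
Definition dens x := pr x ^ 2 + pi x ^ 2.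
Definition kin x := dpr x ^ 2 + dpi x ^ 2.
Definition flux x := pr x * dpr x + pi x * dpi x.
Definition absreg x := sqrt ((Ve x - E) ^ 2 + tau ^ 2).
Definition energy x := eps ^ 2 * kin x + absreg x * dens x.
Definition energy_rate x :=
  2 * ((Ve x - E) + absreg x) * flux x + (Ve x - E) * dVe x / absreg x * dens x.

Lemma is_derive_dens x : 0 <= x <= L -> is_derive dens x (2 * flux x).
Proof.
  intro hx. destruct (Hpsi x hx) as [d1 [_ [d3 _]]]. unfold dens, flux.
  auto_derive; [repeat split; eexists; eassumption|].
  rewrite_Derive d1. rewrite_Derive d3. ring.
Qed.

Lemma is_derive_flux x : 0 <= x <= L ->
  is_derive flux x (kin x + (Ve x - E) * dens x / eps ^ 2).
Proof.
  intro hx. destruct (Hpsi x hx) as [d1 [d2 [d3 [d4 [e1 e2]]]]]. unfold flux, kin, dens.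
  auto_derive; [repeat split; eexists; eassumption|].
  rewrite_Derive d1. rewrite_Derive d2. rewrite_Derive d3. rewrite_Derive d4.
  assert (0 < eps ^ 2) by (apply pow_lt, Heps).
  replace (d2pr x) with ((Ve x - E) * pr x / eps ^ 2) by (apply (Rmult_eq_reg_l (eps ^ 2)); [field_simplify; lra| lra]).
  replace (d2pi x) with ((Ve x - E) * pi x / eps ^ 2) by (apply (Rmult_eq_reg_l (eps ^ 2)); [field_simplify; lra| lra]).
  field. lra.
Qed.

Lemma absreg_facts x : tau <= absreg x /\ Rabs (Ve x - E) <= absreg x /\ absreg x <= Rabs (Ve x - E) + tau.
Proof.
  unfold absreg. set (W := Ve x - E). pose proof (pow2_ge_0 W). pose proof (pow2_ge_0 tau).
  pose proof (Rabs_pos W). split; [| split].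
  - rewrite <- (sqrt_pow2 tau) at 1 by lra. apply sqrt_le_1_alt. lra.
  - rewrite <- (sqrt_pow2 (Rabs W)), pow2_abs by lra. apply sqrt_le_1_alt. lra.
  - rewrite <- (sqrt_pow2 (Rabs W + tau)) by lra. apply sqrt_le_1_alt.
    rewrite <- (pow2_abs W). nra.
Qed.

Lemma absreg_pos x : 0 < absreg x.
Proof. pose proof (absreg_facts x). lra. Qed.

Lemma is_derive_energy x : 0 <= x <= L -> is_derive energy x (energy_rate x).
Proof.
  intro hx. destruct (Hpsi x hx) as [d1 [d2 [d3 [d4 [e1 e2]]]]]. destruct (HVe x hx) as [dv _].
  assert (hm := absreg_pos x). assert (0 < eps ^ 2) by (apply pow_lt, Heps).
  unfold energy, energy_rate, absreg, kin, dens, flux in *.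
  auto_derive.
  - repeat split; try (eexists; eassumption). pose proof (pow2_ge_0 (Ve x + - E)). pose proof (pow_lt tau 2 Htau). simpl in *. lra.
  - rewrite_Derive d1. rewrite_Derive d2. rewrite_Derive d3. rewrite_Derive d4. rewrite_Derive dv.
    replace ((Ve x + - E) * ((Ve x + - E) * 1) + tau * (tau * 1)) with ((Ve x - E) ^ 2 + tau ^ 2) by ring.
    replace (d2pr x) with ((Ve x - E) * pr x / eps ^ 2)
      by (apply (Rmult_eq_reg_l (eps ^ 2)); [field_simplify; lra| lra]).
    replace (d2pi x) with ((Ve x - E) * pi x / eps ^ 2)
      by (apply (Rmult_eq_reg_l (eps ^ 2)); [field_simplify; lra| lra]).
    field. lra.
Qed.

Lemma flux_am_gm r x : 2 * eps * r * Rabs (flux x) <= eps ^ 2 * kin x + r ^ 2 * dens x.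
Proof.
  unfold flux, kin, dens.
  pose proof (pow2_ge_0 (eps * dpr x - r * pr x)). pose proof (pow2_ge_0 (eps * dpi x - r * pi x)).
  pose proof (pow2_ge_0 (eps * dpr x + r * pr x)). pose proof (pow2_ge_0 (eps * dpi x + r * pi x)).
  unfold Rabs; destruct Rcase_abs; nra.
Qed.

Lemma energy_rate_bound x : 0 <= x <= L ->
  Rabs (energy_rate x) <= ((2 * sqrt (Rmax (Ve x - E) 0) + sqrt tau) / eps + C / tau) * energy x.
Proof.
  intro hx. destruct (HVe x hx) as [_ hC].
  destruct (W_plus_sqrt_le (Ve x - E) tau Htau) as [f1 f2]. fold (absreg x) in f1, f2.
  destruct (absreg_facts x) as [hmt [hWm _]].
  unfold energy_rate, energy.
  set (W := Ve x - E) in *. set (m := absreg x) in *.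
  set (K := 2 * sqrt (Rmax W 0) + sqrt tau) in *. set (A := eps ^ 2 * kin x + m * dens x).
  assert (hu : 0 <= dens x) by (unfold dens; nra).
  assert (hA : m * dens x <= A) by (unfold A, kin; pose proof (pow2_ge_0 eps); nra).
  assert (hK : 0 <= K) by (unfold K; pose proof (sqrt_pos (Rmax W 0)); pose proof (sqrt_pos tau); lra).
  assert (t1 : Rabs (2 * (W + m) * flux x) <= K / eps * A).
  { assert (am := flux_am_gm (sqrt m) x). rewrite pow2_sqrt in am by lra.
    rewrite !Rabs_mult, (Rabs_right 2), (Rabs_right (W + m)) by lra.
    apply (Rle_trans _ (2 * (sqrt m * K) * Rabs (flux x))).
    - apply Rmult_le_compat_r; [apply Rabs_pos| lra].
    - replace (2 * (sqrt m * K) * Rabs (flux x)) with (K / eps * (2 * eps * sqrt m * Rabs (flux x)))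
        by (field; lra).
      apply Rmult_le_compat_l; [apply Rdiv_le_0_compat; lra| exact am]. }
  assert (t2 : Rabs (W * dVe x / m * dens x) <= C / tau * A).
  { eapply Rle_trans; [apply drift_term_bound; eauto; lra|].
    apply Rmult_le_compat_l; [apply Rdiv_le_0_compat; [pose proof (Rabs_pos (dVe x))|]; lra| exact hA]. }
  eapply Rle_trans; [apply Rabs_triang|]. fold A. lra.
Qed.

Lemma continuous_weight_clamp : 0 <= L ->
  forall z, continuous (fun s => agmon_weight Ve E (clamp L s)) z.
Proof.
  intros hL z. apply (continuous_sqrt_pos_part (fun s => Ve (clamp L s) - E)).
  apply continuity_pt_filterlim, (continuity_pt_clamp L (fun s => Ve s - E) hL).
  apply continuity_pt_on_0L. intros s hs.
  apply continuity_pt_minus; [| apply continuity_pt_const; now intros ? ?].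
  exact (is_derive_continuity_pt Ve s (dVe s) (proj1 (HVe s hs))).
Qed.

Lemma energy_compare_ordered p q : 0 <= p -> p <= q -> q <= L ->
  let Phi := 2 / eps * RInt (fun s => agmon_weight Ve E (clamp L s)) p q
             + (sqrt tau / eps + C / tau) * (q - p) in
  energy p * exp (- Phi) <= energy q /\ energy q * exp (- Phi) <= energy p.
Proof.
  intros hp hpq hq. set (Ft := fun s => agmon_weight Ve E (clamp L s)). set (k0 := sqrt tau / eps + C / tau).
  assert (cFt := continuous_weight_clamp ltac:(lra)). fold Ft in cFt.
  set (Phi := fun s => 2 / eps * RInt Ft 0 s + k0 * s).
  assert (dPhi : forall s, is_derive Phi s (2 / eps * Ft s + k0)).
  { intro s. unfold Phi. auto_derive; [| ring].
    split; [apply (@ex_RInt_continuous R_CompleteNormedModule); intros; apply cFt|].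
    split; [| exact I]. apply filter_forall. intro t. apply continuity_pt_filterlim, cFt. }
  assert (hPhi : Phi q - Phi p = 2 / eps * RInt Ft p q + k0 * (q - p)).
  { unfold Phi. rewrite <- (RInt_Chasles Ft 0 p q); try (apply (@ex_RInt_continuous R_CompleteNormedModule); intros; apply cFt).
    unfold plus; simpl. ring. }
  rewrite <- hPhi. apply (gronwall_two_sided energy energy_rate Phi (fun s => 2 / eps * Ft s + k0) p q hpq).
  intros s hs. split; [apply is_derive_energy; lra| split; [apply dPhi|]].
  eapply Rle_trans; [apply energy_rate_bound; lra|]. right. f_equal.
  unfold Ft, agmon_weight, k0. rewrite clamp_id by lra. field. lra.
Qed.

Lemma agmon_int_clamp p q : 0 <= p -> p <= q -> q <= L ->
  agmon_int Ve E p q = RInt (fun s => agmon_weight Ve E (clamp L s)) p q /\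
  agmon_int Ve E q p = RInt (fun s => agmon_weight Ve E (clamp L s)) p q.
Proof.
  intros hp hpq hq. set (Ft := fun s => agmon_weight Ve E (clamp L s)).
  assert (ex : ex_RInt Ft p q)
    by (apply (@ex_RInt_continuous R_CompleteNormedModule); intros; apply continuous_weight_clamp; lra).
  assert (pos : 0 <= RInt Ft p q) by (apply RInt_ge_0; [lra| exact ex| intros; apply sqrt_pos]).
  assert (ext : forall a b, Rmin p q <= Rmin a b -> Rmax a b <= Rmax p q ->
                  RInt (agmon_weight Ve E) a b = RInt Ft a b).
  { intros a b ha hb. apply RInt_ext. intros s hs. unfold Ft. rewrite clamp_id; [reflexivity|].
    rewrite (Rmin_left p q), (Rmax_right p q) in * by lra. lra. }
  change (agmon_int Ve E ?a ?b) with (Rabs (RInt (agmon_weight Ve E) a b)). split.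
  - rewrite (ext p q), Rabs_right by lra. reflexivity.
  - rewrite (ext q p), <- (opp_RInt_swap Ft p q ex) by (first [rewrite (Rmin_comm q p) | rewrite (Rmax_comm q p)]; lra).
    unfold opp; simpl. rewrite Rabs_Ropp, Rabs_right; lra.
Qed.

Lemma energy_compare x y : 0 <= x <= L -> 0 <= y <= L ->
  energy y * exp (- (2 / eps * agmon_int Ve E y x + (sqrt tau / eps + C / tau) * Rabs (x - y)))
  <= energy x.
Proof.
  intros hx hy. destruct (Rle_lt_dec y x) as [hyx|hxy].
  - destruct (agmon_int_clamp y x) as [e _]; try lra.
    rewrite e, Rabs_right by lra. apply (energy_compare_ordered y x); lra.
  - destruct (agmon_int_clamp x y) as [_ e]; try lra.
    rewrite e, Rabs_left, Ropp_minus_distr by lra. apply (energy_compare_ordered x y); lra.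
Qed.

Lemma exists_dens_max : 0 < L -> RInt dens 0 L = 1 ->
  exists ys, 0 <= ys <= L /\ (forall x, 0 <= x <= L -> dens x <= dens ys) /\ 1 / L <= dens ys.
Proof.
  intros hL hI.
  assert (cu : forall x, 0 <= x <= L -> continuity_pt dens x)
    by (intros x hx; exact (is_derive_continuity_pt _ _ _ (is_derive_dens x hx))).
  destruct (continuity_ab_maj dens 0 L ltac:(lra) cu) as [ys [Hmax hys]].
  exists ys. split; [exact hys| split; [exact Hmax|]].
  assert (hle : RInt dens 0 L <= RInt (fun _ => dens ys) 0 L).
  { apply RInt_le; [lra| | apply ex_RInt_const| intros; apply Hmax; lra].
    apply (@ex_RInt_continuous R_CompleteNormedModule). intros z hz.
    rewrite Rmin_left, Rmax_right in hz by lra. apply continuity_pt_filterlim, cu, hz. }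
  rewrite RInt_const, hI in hle. unfold scal in hle; simpl in hle; unfold mult in hle; simpl in hle.
  apply (Rmult_le_reg_l L); [lra|]. field_simplify; lra.
Qed.

(* Where Ve > E, a critical point of dens has dens'' = 2 (kin + (Ve - E) dens / eps^2) > 0. *)
Lemma allowed_at_dens_max ys : 0 < ys < L ->
  (forall x, 0 <= x <= L -> dens x <= dens ys) -> 0 < dens ys -> Ve ys <= E.
Proof.
  intros hys Hmax hpos. apply Rnot_lt_le. intro hW.
  assert (g0 : flux ys = 0).
  { assert (dl : derivable_pt_lim dens ys (2 * flux ys)) by (apply is_derive_Reals, is_derive_dens; lra).
    assert (Hz := deriv_maximum dens 0 L ys (exist _ _ dl) ltac:(lra) ltac:(lra)
                    (fun x h1 h2 => Hmax x (conj (Rlt_le _ _ h1) (Rlt_le _ _ h2)))).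
    simpl in Hz. lra. }
  set (l := kin ys + (Ve ys - E) * dens ys / eps ^ 2).
  assert (hl : 0 < l).
  { assert (0 <= kin ys) by (unfold kin; nra). assert (0 < eps ^ 2) by (apply pow_lt, Heps).
    assert (0 < (Ve ys - E) * dens ys / eps ^ 2) by (apply Rdiv_lt_0_compat; [nra| lra]).
    unfold l; lra. }
  assert (dgl : derivable_pt_lim flux ys l) by (apply is_derive_Reals, is_derive_flux; lra).
  destruct (dgl l hl) as [del hdel].
  set (h := Rmin del (L - ys) / 2).
  assert (hh : 0 < h < del /\ ys + h < L).
  { unfold h. pose proof (cond_pos del). pose proof (Rmin_l del (L - ys)). pose proof (Rmin_r del (L - ys)).
    apply Rmin_case_strong; intros; lra. }
  destruct (MVT_cor2 dens (fun x => 2 * flux x) ys (ys + h)) as [c [ec hc]]; [lra| |].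
  { intros c hc. apply is_derive_Reals, is_derive_dens. lra. }
  assert (gc : 0 < flux c).
  { assert (hdc : Rabs (c - ys) < del) by (rewrite Rabs_right; lra).
    specialize (hdel (c - ys) ltac:(lra) hdc). rewrite g0, Rminus_0_r in hdel.
    replace (ys + (c - ys)) with c in hdel by ring.
    apply Rabs_lt_between in hdel.
    assert (0 < flux c / (c - ys)) by lra.
    replace (flux c) with (flux c / (c - ys) * (c - ys)) by (field; lra). nra. }
  assert (dens (ys + h) <= dens ys) by (apply Hmax; lra).
  nra.
Qed.

Lemma exists_allowed_max : 0 < L -> pr 0 = 0 -> pi 0 = 0 -> pr L = 0 -> pi L = 0 ->
  RInt dens 0 L = 1 -> exists ys, 0 <= ys <= L /\ 1 / L <= dens ys /\ Ve ys <= E.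
Proof.
  intros hL h0 h1 h2 h3 hI. destruct (exists_dens_max hL hI) as [ys [hys [Hmax hu]]].
  assert (hpos : 0 < dens ys) by (apply (Rlt_le_trans _ (1 / L)); [apply Rdiv_lt_0_compat; lra| exact hu]).
  assert (ys <> 0) by (intros ->; unfold dens in hpos; rewrite h0, h1 in hpos; lra).
  assert (ys <> L) by (intros ->; unfold dens in hpos; rewrite h2, h3 in hpos; lra).
  exists ys. repeat split; try tauto. apply allowed_at_dens_max; auto; lra.
Qed.

Lemma continuous_dens x : 0 <= x <= L -> continuous dens x.
Proof. intro hx. exact (is_derive_continuous _ _ _ (is_derive_dens x hx)). Qed.

Lemma RInt_dens_nonneg a b : 0 <= a -> a <= b -> b <= L -> 0 <= RInt dens a b.
Proof.
  intros ha hab hb. apply RInt_ge_0; [exact hab| | intros; unfold dens; nra].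
  apply (@ex_RInt_continuous R_CompleteNormedModule). intros z hz.
  rewrite Rmin_left, Rmax_right in hz by lra. apply continuous_dens. lra.
Qed.

Lemma continuous_flux_rate x : 0 <= x <= L ->
  continuous (fun x => kin x + (Ve x - E) * dens x / eps ^ 2) x.
Proof.
  intro hx. destruct (Hpsi x hx) as [d1 [d2 [d3 [d4 _]]]]. destruct (HVe x hx) as [dv _].
  apply (@ex_derive_continuous R_AbsRing R_NormedModule). unfold kin, dens.
  auto_derive. repeat split; try (eexists; eassumption).
Qed.

Lemma exists_small_dens a b c l : 0 <= a -> a <= c -> 0 < l -> c + l <= b -> b <= L ->
  exists p, c <= p <= c + l /\ l * dens p <= RInt dens a b.
Proof.
  intros ha hac hl hcb hb.
  destruct (continuity_ab_min dens c (c + l)) as [p [hp1 hp2]]; [lra| |].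
  { intros z hz. apply continuity_pt_filterlim, continuous_dens. lra. }
  exists p. split; [exact hp2|].
  apply (Rle_trans _ (RInt dens c (c + l))).
  - replace (l * dens p) with (RInt (fun _ => dens p) c (c + l))
      by (rewrite RInt_const; unfold scal; simpl; unfold mult; simpl; ring).
    apply RInt_le; [lra| apply ex_RInt_const| |intros; apply hp1; lra].
    apply (@ex_RInt_continuous R_CompleteNormedModule). intros z hz.
    rewrite Rmin_left, Rmax_right in hz by lra. apply continuous_dens. lra.
  - apply RInt_le_sub; try lra; intros x hx; [unfold dens; nra| apply continuous_dens; lra].
Qed.

(* Integrates eps^2 flux' = energy - (absreg - (Ve - E)) dens. *)
Lemma flux_increment_ge p q alo mu : 0 <= p -> p <= q -> q <= L -> 0 <= mu ->
  (forall t, p <= t <= q -> alo <= energy t) ->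
  (forall t, p <= t <= q -> absreg t - (Ve t - E) <= mu) ->
  alo * (q - p) - mu * RInt dens p q <= eps ^ 2 * (flux q - flux p).
Proof.
  intros hp hpq hq hmu Hlo Hmu.
  set (g' := fun x => kin x + (Ve x - E) * dens x / eps ^ 2).
  assert (exg : ex_RInt g' p q).
  { apply (@ex_RInt_continuous R_CompleteNormedModule). intros z hz.
    rewrite Rmin_left, Rmax_right in hz by lra. apply continuous_flux_rate. lra. }
  assert (exu : ex_RInt dens p q).
  { apply (@ex_RInt_continuous R_CompleteNormedModule). intros z hz.
    rewrite Rmin_left, Rmax_right in hz by lra. apply continuous_dens. lra. }
  assert (ftc : RInt g' p q = flux q - flux p).
  { apply is_RInt_unique, (is_RInt_derive flux g'); intros x hx; rewrite Rmin_left, Rmax_right in hx by lra.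
    - apply is_derive_flux. lra.
    - apply continuous_flux_rate. lra. }
  rewrite <- ftc.
  replace (eps ^ 2 * RInt g' p q) with (RInt (fun x => eps ^ 2 * g' x) p q)
    by exact (RInt_scal g' p q (eps ^ 2) exg).
  replace (alo * (q - p) - mu * RInt dens p q) with (RInt (fun x => alo - mu * dens x) p q).
  2:{ rewrite (RInt_minus (fun _ => alo) (fun x => mu * dens x))
        by (first [apply ex_RInt_const| exact (ex_RInt_scal dens p q mu exu)]).
      replace (RInt (fun x => mu * dens x) p q) with (mu * RInt dens p q)
        by (symmetry; exact (RInt_scal dens p q mu exu)).
      rewrite RInt_const. unfold minus, plus, opp, scal; simpl; unfold mult; simpl. ring. }
  apply RInt_le; [lra| | exact (ex_RInt_scal g' p q (eps ^ 2) exg)|].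
  - apply (ex_RInt_minus (fun _ => alo) (fun x => mu * dens x));
      [apply ex_RInt_const| exact (ex_RInt_scal dens p q mu exu)].
  - intros x hx. assert (0 <= dens x) by (unfold dens; nra). assert (0 < eps ^ 2) by (apply pow_lt, Heps).
    assert (e : eps ^ 2 * g' x = energy x - (absreg x - (Ve x - E)) * dens x)
      by (unfold g', energy; field; lra).
    rewrite e.
    pose proof (Hlo x ltac:(lra)). pose proof (Hmu x ltac:(lra)). nra.
Qed.

Lemma flux_le_energy t ahi S l : 0 < l -> energy t <= ahi -> l * dens t <= S ->
  eps ^ 2 * Rabs (flux t) <= eps * sqrt (S / l * ahi).
Proof.
  intros hl hA hS.
  assert (hu : 0 <= dens t) by (unfold dens; nra). assert (hk : 0 <= kin t) by (unfold kin; nra).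
  assert (hm := absreg_pos t).
  assert (cs : flux t ^ 2 <= dens t * kin t).
  { unfold flux, dens, kin. pose proof (pow2_ge_0 (pr t * dpi t - pi t * dpr t)). nra. }
  assert (hek : eps ^ 2 * kin t <= ahi) by (unfold energy in hA; pose proof (Rmult_le_pos _ _ (Rlt_le _ _ hm) hu); lra).
  assert (hSl : dens t <= S / l) by (apply (Rmult_le_reg_l l); [lra|]; field_simplify; lra).
  assert (hX : dens t * (eps ^ 2 * kin t) <= S / l * ahi)
    by (apply Rmult_le_compat; try lra; apply Rmult_le_pos; [apply pow2_ge_0| lra]).
  rewrite <- (sqrt_pow2 (eps ^ 2 * Rabs (flux t))) by (apply Rmult_le_pos; [apply pow2_ge_0| apply Rabs_pos]).
  rewrite <- (sqrt_pow2 eps) at 2 by lra. rewrite <- sqrt_mult_alt by apply pow2_ge_0.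
  apply sqrt_le_1_alt. rewrite <- (pow2_abs (flux t)) in cs.
  replace ((eps ^ 2 * Rabs (flux t)) ^ 2) with (eps ^ 2 * (eps ^ 2 * Rabs (flux t) ^ 2)) by ring.
  apply Rmult_le_compat_l; [apply pow2_ge_0|]. pose proof (pow2_ge_0 eps). nra.
Qed.

(* Take p in the first and q in the last third of the window with dens below its mean,
   integrate between them, and bound eps^2 |flux| at p and q by Cauchy-Schwarz. *)
Lemma mass_window a b s l alo ahi mu : 0 <= a -> a <= s -> 0 < l -> s + 3 * l <= b -> b <= L ->
  0 <= alo -> 0 <= mu ->
  (forall t, s <= t <= s + 3 * l -> alo <= energy t <= ahi) ->
  (forall t, s <= t <= s + 3 * l -> absreg t - (Ve t - E) <= mu) ->
  l * alo <= mu * RInt dens a b + 2 * eps * sqrt (RInt dens a b / l * ahi).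
Proof.
  intros ha has hl hsb hb halo hmu HA Hmu. set (S := RInt dens a b).
  destruct (exists_small_dens a b s l) as [p [hp hup]]; try lra.
  destruct (exists_small_dens a b (s + 2 * l) l) as [q [hq huq]]; try lra.
  assert (inc := flux_increment_ge p q alo mu ltac:(lra) ltac:(lra) ltac:(lra) hmu
                   (fun t ht => proj1 (HA t ltac:(lra))) (fun t ht => Hmu t ltac:(lra))).
  assert (Spq : RInt dens p q <= S)
    by (apply RInt_le_sub; try lra; intros x hx; [unfold dens; nra| apply continuous_dens; lra]).
  assert (gp := flux_le_energy p ahi S l hl (proj2 (HA p ltac:(lra))) hup).
  assert (gq := flux_le_energy q ahi S l hl (proj2 (HA q ltac:(lra))) huq).
  assert (eps ^ 2 * (flux q - flux p) <= eps ^ 2 * Rabs (flux q) + eps ^ 2 * Rabs (flux p)).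
  { rewrite <- Rmult_plus_distr_l. apply Rmult_le_compat_l; [apply pow2_ge_0|].
    pose proof (Rle_abs (flux q)). pose proof (Rle_abs (- flux p)). rewrite Rabs_Ropp in *. lra. }
  assert (l * alo <= alo * (q - p)) by nra.
  assert (mu * RInt dens p q <= mu * S) by (apply Rmult_le_compat_l; lra).
  lra.
Qed.

End Eigenfunction.

Lemma window_const_le l L tau m mu c3 eps Y F alpha : 0 < l -> 0 < L -> 0 < tau -> tau <= m ->
  0 < mu -> mu <= c3 * m -> 0 < eps -> eps <= 1 -> 0 <= Y -> 0 < F -> m / L * F <= alpha ->
  Rmin (l / (2 * L * c3)) (l ^ 3 * tau / (16 * L)) * exp (- (3 * Y)) * F <=
  Rmin (l * (alpha * exp (- Y)) / (2 * mu))
       (l ^ 3 * (alpha * exp (- Y)) ^ 2 / (16 * eps ^ 2 * (alpha * exp Y))).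
Proof.
  intros hl hL ht htm hmu hmc he he1 hY hF ha.
  assert (hc3 : 0 < c3) by (apply (Rmult_lt_reg_r m); lra).
  assert (e3 : exp (- (3 * Y)) <= exp (- Y)) by (apply exp_le_mono; lra).
  assert (hE3 : 0 < exp (- (3 * Y))) by apply exp_pos.
  assert (hal : 0 < alpha) by (eapply Rlt_le_trans; [| exact ha]; apply Rmult_lt_0_compat; [apply Rdiv_lt_0_compat|]; lra).
  apply Rmin_glb.
  - eapply Rle_trans; [apply Rmult_le_compat_r; [lra| apply Rmult_le_compat_r; [lra| apply Rmin_l]]|].
    replace (l / (2 * L * c3) * exp (- (3 * Y)) * F) with (l * (m / L * F) * exp (- (3 * Y)) / (2 * (c3 * m)))
      by (field; repeat split; lra).
    assert (hmF : 0 <= m / L * F) by (apply Rmult_le_pos; [apply Rdiv_le_0_compat|]; lra).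
    apply Rmult_le_compat.
    + apply Rmult_le_pos; [apply Rmult_le_pos|]; lra.
    + left; apply Rinv_0_lt_compat; nra.
    + rewrite Rmult_assoc. apply Rmult_le_compat_l; [lra|]. apply Rmult_le_compat; lra.
    + apply Rinv_le_contravar; lra.
  - eapply Rle_trans; [apply Rmult_le_compat_r; [lra| apply Rmult_le_compat_r; [lra| apply Rmin_r]]|].
    replace (l ^ 3 * (alpha * exp (- Y)) ^ 2 / (16 * eps ^ 2 * (alpha * exp Y)))
      with (l ^ 3 * (alpha * exp (- (3 * Y))) / (16 * eps ^ 2)).
    2:{ replace (- (3 * Y)) with (- Y + - Y + - Y) by ring. rewrite !exp_plus.
        replace (exp (- Y)) with (/ exp Y) by (rewrite exp_Ropp; reflexivity).
        field. repeat split; try lra. apply Rgt_not_eq, exp_pos. }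
    assert (htF : tau / L * F <= alpha).
    { eapply Rle_trans; [| exact ha]. apply Rmult_le_compat_r; [lra|]. apply Rmult_le_compat_r; [| lra].
      left; apply Rinv_0_lt_compat, hL. }
    assert (he2 : 0 < eps ^ 2 <= 1) by (split; [apply pow_lt, he| simpl; nra]).
    assert (hG : 0 < l ^ 3 * exp (- (3 * Y))) by (apply Rmult_lt_0_compat; [apply pow_lt|]; lra).
    apply (Rle_trans _ (l ^ 3 * exp (- (3 * Y)) * (tau / L * F) / 16)); [right; field; lra|].
    apply (Rle_trans _ (l ^ 3 * exp (- (3 * Y)) * alpha / 16)); [apply Rmult_le_compat_r; [lra| apply Rmult_le_compat_l; lra]|].
    replace (l ^ 3 * (alpha * exp (- (3 * Y))) / (16 * eps ^ 2)) with (l ^ 3 * exp (- (3 * Y)) * alpha / 16 / eps ^ 2)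
      by (field; lra).
    unfold Rdiv at 3. rewrite <- (Rmult_1_r (l ^ 3 * exp (- (3 * Y)) * alpha / 16)) at 1.
    apply Rmult_le_compat_l; [apply Rdiv_le_0_compat; [apply Rmult_le_pos|]; lra|].
    rewrite <- Rinv_1. apply Rinv_le_contravar; lra.
Qed.

Definition ratio_const (B tau : R) : R := 3 + 4 * (B + 1) / tau.

Definition boundary_const (L B C tau : R) : R := exp (- (C * L / tau)) / (L * ratio_const B tau).

Definition interior_const (L B C tau l : R) : R :=
  Rmin (l / (2 * L * ratio_const B tau)) (l ^ 3 * tau / (16 * L))
  * exp (- (9 * l * C / tau)) * exp (- (C * L / tau)).

Section Estimates.

Variables (L : R) (V dV : R -> R) (x0 : R).
Hypothesis HL : 0 < L.
Hypothesis HV : C1_on L V dV.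
Hypothesis Hx0 : 0 < x0 < L.
Hypothesis Hcrit : forall x, 0 <= x <= L -> (dV x = 0 <-> x = x0).
Hypothesis Hmin : forall x, 0 <= x <= L -> V x0 <= V x.

Variables (eps E tau eta B C delta : R) (Ve dVe pr dpr d2pr pi dpi d2pi : R -> R).
Hypothesis Heps : 0 < eps.
Hypothesis Htau : 0 < tau.
Hypothesis Heta : 0 <= eta.
Hypothesis Hbudget : L * (sqrt eta + sqrt (2 * eta) + sqrt tau / 2) <= delta / 4.
Hypothesis Hpsi : forall x, 0 <= x <= L ->
  is_derive pr x (dpr x) /\ is_derive dpr x (d2pr x) /\
  is_derive pi x (dpi x) /\ is_derive dpi x (d2pi x) /\
  - eps ^ 2 * d2pr x + Ve x * pr x = E * pr x /\
  - eps ^ 2 * d2pi x + Ve x * pi x = E * pi x.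
Hypothesis HVe : forall x, 0 <= x <= L -> is_derive Ve x (dVe x) /\ Rabs (dVe x) <= C.
Hypothesis HB : forall x, 0 <= x <= L -> Rabs (Ve x) <= B.
Hypothesis Hclose : forall x, 0 <= x <= L -> Rabs (V x - Ve x) <= eta.

Local Notation A := (energy eps E tau Ve pr dpr pi dpi).
Local Notation m := (absreg E tau Ve).

Lemma ratio_const_pos : 0 < ratio_const B tau.
Proof.
  unfold ratio_const. pose proof (Rabs_pos (Ve 0)). pose proof (HB 0 ltac:(lra)).
  assert (0 <= 4 * (B + 1) / tau) by (apply Rdiv_le_0_compat; lra). lra.
Qed.

Lemma Ve_continuity_pt s : 0 <= s <= L -> continuity_pt Ve s.
Proof. intro hs. exact (is_derive_continuity_pt _ _ _ (proj1 (HVe s hs))). Qed.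

Lemma absreg_drop_le t : 0 <= t <= L -> m t - (Ve t - E) <= 2 * (Rabs E + B) + tau.
Proof.
  intro ht. destruct (absreg_facts E tau Ve Htau t) as [_ [_ h]].
  pose proof (HB t ht). pose proof (Rabs_triang (Ve t) (- E)). rewrite Rabs_Ropp in *.
  pose proof (Rle_abs (- (Ve t - E))). rewrite Rabs_Ropp in *. unfold Rminus in *. lra.
Qed.

Section AtMaximum.

Variable ys : R.
Hypothesis Hys : 0 <= ys <= L.
Hypothesis Hys_dens : 1 / L <= dens pr pi ys.
Hypothesis Hys_allowed : Ve ys <= E.

Lemma absreg_max_bounds :
  tau <= m ys /\ Rabs E + 1 <= ratio_const B tau * m ys /\
  2 * (Rabs E + B) + tau <= ratio_const B tau * m ys.
Proof.
  destruct (absreg_facts E tau Ve Htau ys) as [h1 [h2 _]].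
  assert (hB := HB ys Hys). apply Rabs_le_between in hB. pose proof (Rabs_pos (Ve ys)).
  assert (hE : Rabs E <= m ys + B).
  { apply Rabs_le_between in h2. apply Rabs_le. lra. }
  assert (hr : (4 * B + 4) <= (4 * (B + 1) / tau) * m ys).
  { replace (4 * (B + 1) / tau * m ys) with ((4 * B + 4) * (m ys / tau)) by (field; lra).
    assert (1 <= m ys / tau) by (apply (Rmult_le_reg_r tau); [lra|]; field_simplify; lra).
    pose proof (Rabs_pos (Ve ys)). nra. }
  unfold ratio_const. pose proof (Rabs_pos E). split; [exact h1| split]; nra.
Qed.

Lemma energy_ge_agmon_dist x : 0 <= x <= L ->
  m ys / L * exp (- (C * L / tau)) * exp (- (2 / eps) * (agmon_dist L V x0 E x + delta / 4)) <= A x.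
Proof.
  intro hx.
  assert (cmp := energy_compare L eps E tau C Ve dVe pr dpr d2pr pi dpi d2pi Heps Htau Hpsi HVe x ys hx Hys).
  assert (dist := agmon_int_le_agmon_dist L V dV x0 HV Hx0 Hcrit Hmin Ve E eta ys x Heta
                    Ve_continuity_pt Hclose Hys Hys_allowed hx).
  assert (hA : m ys / L <= A ys).
  { unfold energy. pose proof (absreg_pos E tau Ve Htau ys). unfold kin.
    assert (0 <= eps ^ 2 * (dpr ys ^ 2 + dpi ys ^ 2)) by (apply Rmult_le_pos; [apply pow2_ge_0| nra]).
    assert (m ys * (1 / L) <= m ys * dens pr pi ys) by (apply Rmult_le_compat_l; lra).
    unfold Rdiv in *. lra. }
  assert (hC : 0 <= C) by (destruct (HVe x hx); eapply Rle_trans; [apply Rabs_pos| eassumption]).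
  eapply Rle_trans; [| exact cmp]. rewrite Rmult_assoc, <- exp_plus.
  apply Rmult_le_compat; [apply Rdiv_le_0_compat; [apply Rlt_le, absreg_pos|]; lra| left; apply exp_pos| exact hA|].
  apply exp_le_mono.
  assert (hk : (sqrt tau / eps + C / tau) * Rabs (x - ys) <= (sqrt tau / eps + C / tau) * L).
  { apply Rmult_le_compat_l; [| apply Rabs_sub_le; lra].
    pose proof (sqrt_pos tau). apply Rplus_le_le_0_compat; apply Rdiv_le_0_compat; lra. }
  assert (hI : 2 / eps * agmon_int Ve E ys x <= 2 / eps * (agmon_dist L V x0 E x + L * (sqrt eta + sqrt (2 * eta)))).
  { apply Rmult_le_compat_l; [apply Rdiv_le_0_compat|]; lra. }
  assert (hd : 2 / eps * (agmon_dist L V x0 E x + L * (sqrt eta + sqrt (2 * eta))) + (sqrt tau / eps + C / tau) * L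
               <= 2 / eps * (agmon_dist L V x0 E x + delta / 4) + C * L / tau).
  { replace (2 / eps * (agmon_dist L V x0 E x + L * (sqrt eta + sqrt (2 * eta))) + (sqrt tau / eps + C / tau) * L)
      with (2 / eps * (agmon_dist L V x0 E x + L * (sqrt eta + sqrt (2 * eta) + sqrt tau / 2)) + C * L / tau)
      by (field; lra).
    apply Rplus_le_compat_r, Rmult_le_compat_l; [apply Rdiv_le_0_compat|]; lra. }
  lra.
Qed.

Lemma boundary_estimate xb : 0 <= xb <= L -> pr xb = 0 -> pi xb = 0 ->
  eps * (Rabs (ln (boundary_const L B C tau)) + 1) <= delta ->
  exp (- (agmon_dist L V x0 E xb + delta) / eps)
  <= eps / sqrt (Rabs E + 1) * sqrt (dpr xb ^ 2 + dpi xb ^ 2).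
Proof.
  intros hxb hp hq hsmall.
  assert (hlow := energy_ge_agmon_dist xb hxb).
  assert (hA : A xb = eps ^ 2 * (dpr xb ^ 2 + dpi xb ^ 2)) by (unfold energy, kin, dens; rewrite hp, hq; ring).
  destruct absreg_max_bounds as [_ [hQ _]].
  assert (hc3 := ratio_const_pos). assert (hm := absreg_pos E tau Ve Htau ys).
  set (Q := Rabs E + 1) in *. set (P := dpr xb ^ 2 + dpi xb ^ 2) in *.
  set (d := agmon_dist L V x0 E xb) in *.
  assert (hQ0 : 0 < Q) by (unfold Q; pose proof (Rabs_pos E); lra).
  assert (hP : 0 <= P) by (unfold P; nra).
  replace (eps / sqrt Q * sqrt P) with (sqrt (eps ^ 2 * P / Q)).
  2:{ rewrite sqrt_div_alt, sqrt_mult_alt, sqrt_pow2 by (try apply pow2_ge_0; lra).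
      field. apply Rgt_not_eq, sqrt_lt_R0, hQ0. }
  assert (hcb : 0 < boundary_const L B C tau)
    by (apply Rdiv_lt_0_compat; [apply exp_pos| apply Rmult_lt_0_compat; lra]).
  apply (exp_absorb_const _ eps d delta _ hcb Heps hsmall).
  apply (Rmult_le_reg_r Q); [exact hQ0|]. replace (eps ^ 2 * P / Q * Q) with (eps ^ 2 * P) by (field; lra).
  rewrite <- hA. eapply Rle_trans; [| exact hlow].
  assert (e1 : exp (- (2 / eps) * (d + delta / 2)) <= exp (- (2 / eps) * (d + delta / 4))).
  { apply exp_le_mono. assert (0 <= delta) by (pose proof (Rabs_pos (ln (boundary_const L B C tau))); nra).
    assert (0 < 2 / eps) by (apply Rdiv_lt_0_compat; lra). nra. }
  apply (Rle_trans _ (boundary_const L B C tau * exp (- (2 / eps) * (d + delta / 4)) * (ratio_const B tau * m ys))).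
  - apply Rmult_le_compat; try lra.
    + apply Rmult_le_pos; [lra| left; apply exp_pos].
    + apply Rmult_le_compat_l; lra.
  - right. unfold boundary_const. field. lra.
Qed.

Lemma energy_window p q l : 0 <= p <= L -> 0 <= q <= L -> Rabs (q - p) <= 3 * l ->
  A p * exp (- (3 * l * (2 * sqrt (2 * B) + sqrt tau) / eps + 3 * l * C / tau)) <= A q.
Proof.
  intros hp hq hpq.
  assert (cmp := energy_compare L eps E tau C Ve dVe pr dpr d2pr pi dpi d2pi Heps Htau Hpsi HVe q p hq hp).
  assert (hB := HB ys Hys). apply Rabs_le_between in hB.
  assert (hC : 0 <= C) by (destruct (HVe p hp); eapply Rle_trans; [apply Rabs_pos| eassumption]).
  assert (hI : agmon_int Ve E p q <= sqrt (2 * B) * Rabs (q - p)).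
  { apply (agmon_int_le_const L); auto using Ve_continuity_pt; [apply sqrt_pos|]. intros s hs.
    assert (h := HB s (segment_in L p q s hp hq hs)). apply Rabs_le_between in h.
    rewrite pow2_sqrt by lra. lra. }
  eapply Rle_trans; [| exact cmp]. apply Rmult_le_compat_l.
  { unfold energy, kin. pose proof (absreg_pos E tau Ve Htau p). unfold dens.
    pose proof (pow2_ge_0 eps). nra. }
  apply exp_le_mono, Ropp_le_contravar.
  assert (he : 0 < 2 / eps) by (apply Rdiv_lt_0_compat; lra).
  assert (hk : 0 <= sqrt tau / eps + C / tau)
    by (pose proof (sqrt_pos tau); apply Rplus_le_le_0_compat; apply Rdiv_le_0_compat; lra).
  apply (Rle_trans _ (2 / eps * (sqrt (2 * B) * (3 * l)) + (sqrt tau / eps + C / tau) * (3 * l))).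
  - pose proof (sqrt_pos (2 * B)).
    apply Rplus_le_compat; apply Rmult_le_compat_l; try lra.
    eapply Rle_trans; [exact hI| apply Rmult_le_compat_l; lra].
  - right. field. lra.
Qed.

Lemma energy_window_bounds p q l : 0 <= p <= L -> 0 <= q <= L -> Rabs (q - p) <= 3 * l ->
  let Y := 3 * l * (2 * sqrt (2 * B) + sqrt tau) / eps + 3 * l * C / tau in
  A p * exp (- Y) <= A q <= A p * exp Y.
Proof.
  intros hp hq hpq Y. split; [exact (energy_window p q l hp hq hpq)|].
  assert (w := energy_window q p l hq hp ltac:(rewrite Rabs_minus_sym; exact hpq)). fold Y in w.
  apply (Rmult_le_compat_r (exp Y)) in w; [| left; apply exp_pos].
  rewrite Rmult_assoc, <- exp_plus, Rplus_opp_l, exp_0, Rmult_1_r in w. exact w.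
Qed.

Lemma interior_mass_ge a b l x1 : 0 <= a -> b <= L -> a <= x1 <= b -> 0 < l -> 3 * l <= b - a ->
  eps <= 1 ->
  let Y := 3 * l * (2 * sqrt (2 * B) + sqrt tau) / eps + 3 * l * C / tau in
  Rmin (l / (2 * L * ratio_const B tau)) (l ^ 3 * tau / (16 * L)) * exp (- (3 * Y))
  * (exp (- (C * L / tau)) * exp (- (2 / eps) * (agmon_dist L V x0 E x1 + delta / 4)))
  <= RInt (dens pr pi) a b.
Proof.
  intros ha hb hx1 hl hab heps1 Y.
  set (s := Rmin x1 (b - 3 * l)). set (alpha := A x1).
  assert (hs : a <= s /\ s + 3 * l <= b) by (unfold s, Rmin; destruct Rle_dec; lra).
  assert (hwin : forall t, s <= t <= s + 3 * l -> Rabs (t - x1) <= 3 * l)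
    by (intros t ht; apply Rabs_le; unfold s, Rmin in ht; destruct Rle_dec in ht; lra).
  destruct absreg_max_bounds as [hmt [_ hmu]].
  set (mu := 2 * (Rabs E + B) + tau) in hmu.
  assert (hB0 : 0 <= B) by (eapply Rle_trans; [apply Rabs_pos| exact (HB ys Hys)]).
  assert (hmu0 : 0 < mu) by (unfold mu; pose proof (Rabs_pos E); lra).
  assert (hF := energy_ge_agmon_dist x1 ltac:(lra)). fold alpha in hF.
  assert (hY : 0 <= Y).
  { unfold Y. pose proof (sqrt_pos (2 * B)). pose proof (sqrt_pos tau).
    destruct (HVe x1 ltac:(lra)) as [_ hc]. pose proof (Rabs_pos (dVe x1)).
    apply Rplus_le_le_0_compat; apply Rdiv_le_0_compat; nra. }
  assert (hF0 : 0 < exp (- (C * L / tau)) * exp (- (2 / eps) * (agmon_dist L V x0 E x1 + delta / 4)))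
    by (apply Rmult_lt_0_compat; apply exp_pos).
  assert (halpha : 0 < alpha).
  { eapply Rlt_le_trans; [| exact hF]. rewrite Rmult_assoc.
    apply Rmult_lt_0_compat; [apply Rdiv_lt_0_compat; [apply absreg_pos|]|]; lra. }
  eapply Rle_trans; [apply (window_const_le l L tau (m ys) mu (ratio_const B tau) eps Y); auto; try lra;
                     rewrite <- Rmult_assoc; exact hF|].
  apply quadratic_lower_bound; auto; try (apply Rmult_lt_0_compat; auto; apply exp_pos).
  - apply (RInt_dens_nonneg L eps E Ve pr dpr d2pr pi dpi d2pi Hpsi); lra.
  - apply (mass_window L eps E tau C Ve dVe pr dpr d2pr pi dpi d2pi Heps Htau Hpsi HVe a b s l); try lra.
    + apply Rmult_le_pos; [lra| left; apply exp_pos].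
    + intros t ht. apply (energy_window_bounds x1 t l); try lra. apply hwin, ht.
    + intros t ht. apply absreg_drop_le. lra.
Qed.

Lemma interior_estimate a b l x1 : 0 <= a -> b <= L -> a <= x1 <= b -> 0 < l -> 3 * l <= b - a ->
  eps <= 1 -> 9 * l * (2 * sqrt (2 * B) + sqrt tau) <= delta / 8 ->
  eps * (Rabs (ln (interior_const L B C tau l)) + 1) <= delta ->
  exp (- (agmon_dist L V x0 E x1 + delta) / eps) <= sqrt (RInt (dens pr pi) a b).
Proof.
  intros ha hb hx1 hl hab heps1 hlK hsmall.
  assert (M := interior_mass_ge a b l x1 ha hb hx1 hl hab heps1). cbv zeta in M.
  set (d := agmon_dist L V x0 E x1) in *.
  set (mn := Rmin (l / (2 * L * ratio_const B tau)) (l ^ 3 * tau / (16 * L))) in *.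
  assert (hmn : 0 < mn).
  { pose proof ratio_const_pos. unfold mn.
    apply Rmin_case; apply Rdiv_lt_0_compat; try apply Rmult_lt_0_compat; try apply pow_lt; nra. }
  assert (hci : 0 < interior_const L B C tau l)
    by (apply Rmult_lt_0_compat; [apply Rmult_lt_0_compat|]; [exact hmn| apply exp_pos| apply exp_pos]).
  apply (exp_absorb_const _ eps d delta _ hci Heps hsmall).
  eapply Rle_trans; [| exact M]. unfold interior_const. fold mn.
  rewrite !Rmult_assoc. apply Rmult_le_compat_l; [lra|]. rewrite <- !exp_plus. apply exp_le_mono.
  assert (hd : 0 <= delta) by (pose proof (Rabs_pos (ln (interior_const L B C tau l))); nra).
  assert (9 * l * (2 * sqrt (2 * B) + sqrt tau) / eps <= (delta / 8) / eps)
    by (apply Rmult_le_compat_r; [left; apply Rinv_0_lt_compat|]; lra).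
  assert (2 / eps * (delta / 4) = (delta / 8) / eps + 3 * ((delta / 8) / eps)) by (field; lra).
  assert (0 <= (delta / 8) / eps) by (apply Rdiv_le_0_compat; lra).
  replace (- (3 * (3 * l * (2 * sqrt (2 * B) + sqrt tau) / eps + 3 * l * C / tau)))
    with (- (9 * l * (2 * sqrt (2 * B) + sqrt tau) / eps) - 9 * l * C / tau) by (field; lra).
  replace (- (2 / eps) * (d + delta / 2)) with (- (2 / eps) * (d + delta / 4) - 2 / eps * (delta / 4))
    by (field; lra).
  lra.
Qed.

End AtMaximum.

Lemma eigenfunction_lower_bounds (U : R -> Prop) a b l :
  0 <= a -> a < b -> b <= L -> (forall x, a < x < b -> U x) -> (forall x, U x -> a <= x <= b) ->
  eps <= 1 -> 0 < l -> 3 * l <= b - a -> 9 * l * (2 * sqrt (2 * B) + sqrt tau) <= delta / 8 ->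
  eps * (Rabs (ln (boundary_const L B C tau)) + 1) <= delta ->
  eps * (Rabs (ln (interior_const L B C tau l)) + 1) <= delta ->
  pr 0 = 0 -> pi 0 = 0 -> pr L = 0 -> pi L = 0 -> RInt (fun x => pr x ^ 2 + pi x ^ 2) 0 L = 1 ->
  sqrt (RInt (fun x => pr x ^ 2 + pi x ^ 2) a b) >= exp (- (agmon_dist_set L V x0 E U + delta) / eps) /\
  eps / sqrt (Rabs E + 1) * sqrt (dpr 0 ^ 2 + dpi 0 ^ 2) >= exp (- (agmon_dist L V x0 E 0 + delta) / eps) /\
  eps / sqrt (Rabs E + 1) * sqrt (dpr L ^ 2 + dpi L ^ 2) >= exp (- (agmon_dist L V x0 E L + delta) / eps).
Proof.
  intros ha hab hb HU1 HU2 heps1 hl hl3 hlK hcb hci h0 h1 h2 h3 hI.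
  destruct (exists_allowed_max L eps E Ve pr dpr d2pr pi dpi d2pi Heps Hpsi HL h0 h1 h2 h3 hI)
    as [ys [hys [hu hallow]]].
  split; [| split]; apply Rle_ge.
  - apply exp_Glb_Rbar_le; [exact Heps| |].
    + exists (agmon_dist L V x0 E ((a + b) / 2)), ((a + b) / 2). split; [apply HU1; lra| reflexivity].
    + intros t [x1 [hx1 ->]]. apply (interior_estimate ys hys hu hallow a b l x1); auto.
  - apply (boundary_estimate ys hys hu hallow); auto; lra.
  - apply (boundary_estimate ys hys hu hallow); auto; lra.
Qed.

End Estimates.

(* Serves both as the closeness [eta] of [Veps] to [V] and as the regularisation [tau]. *)
Definition small_param (L delta : R) : R := Rmin 1 ((delta / (16 * L)) ^ 2).

Lemma small_param_spec L delta : 0 < L -> 0 < delta ->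
  0 < small_param L delta <= 1 /\
  L * (sqrt (small_param L delta) + sqrt (2 * small_param L delta) + sqrt (small_param L delta) / 2)
  <= delta / 4.
Proof.
  intros hL hd. set (eta := small_param L delta).
  assert (hq : 0 < delta / (16 * L)) by (apply Rdiv_lt_0_compat; lra).
  assert (heta : 0 < eta <= 1)
    by (split; [unfold eta, small_param; apply Rmin_case; [lra| apply pow_lt, hq]| apply Rmin_l]).
  split; [exact heta|].
  assert (hs : sqrt eta <= delta / (16 * L)).
  { rewrite <- (sqrt_pow2 (delta / (16 * L))) by lra. apply sqrt_le_1_alt, Rmin_r. }
  assert (h2 : sqrt (2 * eta) <= 2 * sqrt eta).
  { rewrite sqrt_mult_alt by lra. apply Rmult_le_compat_r; [apply sqrt_pos|].
    rewrite <- (sqrt_pow2 2) at 2 by lra. apply sqrt_le_1_alt. lra. }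
  apply (Rle_trans _ (L * (7 / 2 * (delta / (16 * L))))); [apply Rmult_le_compat_l; lra|].
  replace (L * (7 / 2 * (delta / (16 * L)))) with (7 * delta / 32) by (field; lra). lra.
Qed.

Definition window_length (a b B delta : R) : R :=
  Rmin ((b - a) / 3) (delta / (72 * (2 * sqrt (2 * B) + 1))).

Lemma window_length_spec a b B delta tau : a < b -> 0 < delta -> 0 <= tau <= 1 ->
  let l := window_length a b B delta in
  0 < l /\ 3 * l <= b - a /\ 9 * l * (2 * sqrt (2 * B) + sqrt tau) <= delta / 8.
Proof.
  intros hab hd ht l.
  assert (hK : 1 <= 2 * sqrt (2 * B) + 1) by (pose proof (sqrt_pos (2 * B)); lra).
  assert (hst : sqrt tau <= 1) by (rewrite <- sqrt_1; apply sqrt_le_1_alt; lra).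
  assert (hl : 0 < l) by (unfold l, window_length; apply Rmin_case; apply Rdiv_lt_0_compat; lra).
  repeat split; [exact hl| pose proof (Rmin_l ((b - a) / 3) (delta / (72 * (2 * sqrt (2 * B) + 1)))); unfold l, window_length; lra|].
  assert (hlK : l * (2 * sqrt (2 * B) + 1) <= delta / 72).
  { apply (Rle_trans _ (delta / (72 * (2 * sqrt (2 * B) + 1)) * (2 * sqrt (2 * B) + 1))).
    - apply Rmult_le_compat_r; [lra| apply Rmin_r].
    - right. field. lra. }
  pose proof (sqrt_pos tau). nra.
Qed.

Theorem theorem1p2
  (L : R) (V dV : R -> R) (Veps dVeps : R -> R -> R) (x0 : R)
  (HL : 0 < L)
  (HV : C1_on L V dV)
  (HVeps : forall eps, 0 < eps <= 1 -> C1_on L (Veps eps) (dVeps eps))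
  (Hconv : forall eta, 0 < eta -> exists e1, 0 < e1 /\
     forall eps, 0 < eps <= 1 -> eps < e1 ->
       forall x, 0 <= x <= L ->
         Rabs (V x - Veps eps x) <= eta /\ Rabs (dV x - dVeps eps x) <= eta)
  (Hx0 : 0 < x0 < L)
  (Hcrit : forall x, 0 <= x <= L -> (dV x = 0 <-> x = x0))
  (Hmin : forall x, 0 <= x <= L -> V x0 <= V x) :
  forall (U : R -> Prop) (a b : R),
    0 <= a -> a < b -> b <= L ->
    (forall x, a < x < b -> U x) -> (forall x, U x -> a <= x <= b) ->
  forall delta, 0 < delta ->
  exists eps0, 0 < eps0 /\
  forall eps, 0 < eps -> eps < eps0 -> eps <= 1 ->
  forall (E : R) (pr dpr d2pr pi dpi d2pi : R -> R),
    (forall x, 0 <= x <= L ->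
       is_derive pr x (dpr x) /\ is_derive dpr x (d2pr x) /\
       is_derive pi x (dpi x) /\ is_derive dpi x (d2pi x) /\
       - eps ^ 2 * d2pr x + Veps eps x * pr x = E * pr x /\
       - eps ^ 2 * d2pi x + Veps eps x * pi x = E * pi x) ->
    pr 0 = 0 -> pi 0 = 0 -> pr L = 0 -> pi L = 0 ->
    RInt (fun x => pr x ^ 2 + pi x ^ 2) 0 L = 1 ->
    sqrt (RInt (fun x => pr x ^ 2 + pi x ^ 2) a b)
      >= exp (- (agmon_dist_set L V x0 E U + delta) / eps) /\
    eps / sqrt (Rabs E + 1) * sqrt (dpr 0 ^ 2 + dpi 0 ^ 2)
      >= exp (- (agmon_dist L V x0 E 0 + delta) / eps) /\
    eps / sqrt (Rabs E + 1) * sqrt (dpr L ^ 2 + dpi L ^ 2)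
      >= exp (- (agmon_dist L V x0 E L + delta) / eps).
Proof.
  intros U a b ha hab hbL HU1 HU2 delta hdelta.
  destruct (C1_on_bounded L V dV HL HV) as [B [M HBM]].
  destruct (small_param_spec L delta HL hdelta) as [heta hbudget].
  set (eta := small_param L delta) in *.
  destruct (window_length_spec a b (B + 1) delta eta hab hdelta ltac:(lra)) as [hl [hl3 hlK]].
  set (l := window_length a b (B + 1) delta) in *.
  destruct (Hconv eta (proj1 heta)) as [e1 [he1 Hclose]].
  set (cb := Rabs (ln (boundary_const L (B + 1) (M + 1) eta)) + 1).
  set (ci := Rabs (ln (interior_const L (B + 1) (M + 1) eta l)) + 1).
  assert (hcb : 0 < cb) by (unfold cb; pose proof (Rabs_pos (ln (boundary_const L (B + 1) (M + 1) eta))); lra).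
  assert (hci : 0 < ci) by (unfold ci; pose proof (Rabs_pos (ln (interior_const L (B + 1) (M + 1) eta l))); lra).
  exists (Rmin e1 (Rmin (delta / cb) (delta / ci))).
  split; [repeat apply Rmin_case; try apply Rdiv_lt_0_compat; lra|].
  intros eps heps heps0 heps1 E pr dpr d2pr pi dpi d2pi Hpsi h0 h1 h2 h3 hI.
  destruct (lt_Rmin3 _ _ _ _ heps0) as [he1' [hsb hsi]].
  destruct (C1_on_perturbation L V dV (Veps eps) (dVeps eps) B M eta (HVeps eps (conj heps heps1))
              (proj2 heta) HBM (Hclose eps (conj heps heps1) he1')) as [HVe HB'].
  assert (Hclose' : forall x, 0 <= x <= L -> Rabs (V x - Veps eps x) <= eta)
    by (intros x hx; exact (proj1 (Hclose eps (conj heps heps1) he1' x hx))).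
  apply (eigenfunction_lower_bounds L V dV x0 HL HV Hx0 Hcrit Hmin eps E eta eta (B + 1) (M + 1) delta
           (Veps eps) (dVeps eps) pr dpr d2pr pi dpi d2pi heps (proj1 heta) (Rlt_le _ _ (proj1 heta))
           hbudget Hpsi HVe HB' Hclose' U a b l); auto; now apply lt_div_mul_le.
Qed.
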